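(* Let $q$ be a prime power, $k\ge1$ and $n\ge k+2$. There does not exist a Cameron-Liebler $k$-set of $\mathrm{AG}(n,q)$ with parameter $x=2$.
   Context: $\mathrm{AG}(n,q)$ is $\mathrm{PG}(n,q)$ with a hyperplane $\pi_\infty$ removed; affine points are points outside $\pi_\infty$, affine $k$-spaces are $k$-dimensional projective subspaces not contained in $\pi_\infty$. With $A_n$ the incidence matrix of affine points versus affine $k$-spaces, a set $\mathcal{L}$ of affine $k$-spaces is a Cameron-Liebler $k$-set of $\mathrm{AG}(n,q)$ if its characteristic vector lies in the real row space $\mathrm{Im}(A_n^T)$; its parameter is $|\mathcal{L}|/\left[{n\atop k}\right]_q$, where $\left[{a\atop b}\right]_q=\frac{(q^a-1)\cdots(q^{a-b+1}-1)}{(q^b-1)\cdots(q-1)}$. *)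

From HB Require Import structures.
From mathcomp Require Import all_boot all_order all_algebra all_field.
From mathcomp Require Import reals.
Set Implicit Arguments. Unset Strict Implicit. Unset Printing Implicit Defensive.
Import Order.TTheory GRing.Theory Num.Theory.
Local Open Scope ring_scope.

(* Model of AG(n,q): points are row vectors 'rV[F]_n over a finite field F
   with q = #|F| elements. *)
Definition affine_kspaces (F : finFieldType) (n k : nat) : {set {set 'rV[F]_n}} :=
  [set S | [exists v : 'rV[F]_n, exists U : 'M[F]_n,
      (\rank U == k) && (S == [set x | (x - v <= U)%MS])]].

Definition gauss_binom (R : realType) (q a b : nat) : R :=
  (\prod_(i < b) ((q%:R : R) ^+ (a - i) - 1)) / (\prod_(i < b) ((q%:R : R) ^+ i.+1 - 1)).

(* Cameron-Liebler k-set: a set L of affine k-spaces whose characteristic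
   vector (indexed by affine k-spaces) lies in the real row space Im(A_n^T)
   of the point / k-space incidence matrix A_n, i.e. chi_L = A_n^T y for
   some real vector y indexed by the affine points. *)
Definition is_CL_kset (R : realType) (F : finFieldType) (n k : nat)
    (L : {set {set 'rV[F]_n}}) : Prop :=
  L \subset affine_kspaces F n k /\
  exists y : 'rV[F]_n -> R,
    forall K, K \in affine_kspaces F n k ->
      ((K \in L)%:R : R) = \sum_(P in K) y P.

Definition CL_parameter (R : realType) (F : finFieldType) (n k : nat)
    (L : {set {set 'rV[F]_n}}) : R :=
  (#|L|%:R : R) / gauss_binom R #|F| n k.

From HB Require Import structures.
From mathcomp Require Import all_boot all_order all_algebra all_field.
From mathcomp Require Import reals zify.
Set Implicit Arguments. Unset Strict Implicit. Unset Printing Implicit Defensive.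
Import Order.TTheory GRing.Theory Num.Theory.
Local Open Scope ring_scope.

(* Let chi_L = A^T y.  For a k-space U inside a subspace S, the flats of
   direction U partition a coset e + S, so summing chi_L = A^T y over them
   shows that the number of members of L among them is the sum of y over
   e + S, which does not depend on U.  With S
   the whole space, every parallel class contains the same number s of
   members, hence |L| = s [n, k]_q and the parameter is s.
   Suppose s = 2.  The two members a + U, b + U of the class of U span the
   (k+1)-space W_U = U + <b - a>, which is the only (k+1)-space through U with
   a coset containing both members.  Take a (k+2)-space D containing W_{U0}:
   its coset through a holds two members of the class of U0, hence of every
   k-space of D, so W_U lies in D for every such U.  Choosing U2 in D but not
   in W_{U0} (possible as k >= 1), the hyperplanes W_{U0} and W_{U2} of D
   meet in a k-space U, and uniqueness forces W_{U0} = W_U = W_{U2}, which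
   is absurd. *)

Section MatrixRank.
Variables (F : fieldType) (n : nat).

Lemma mxrank_adds_notin m (U : 'M[F]_(m, n)) (v : 'rV[F]_n) :
  ~~ (v <= U)%MS -> \rank (U + v)%MS = (\rank U).+1.
Proof.
move=> vU; have v0 : v != 0 by apply: contraNneq vU => ->; exact: sub0mx.
rewrite mxrank_disjoint_sum ?rank_rV ?v0 ?addn1 //; apply/eqP.
rewrite -submx0; apply: contraNT vU => capU0.
have : \rank (U :&: v)%MS == \rank v.
  by rewrite eqn_leq mxrankS ?capmxSr // rank_rV v0 lt0n mxrank_eq0 -submx0.
by rewrite (mxrank_leqif_sup (capmxSr U v)).2 sub_capmx => /andP[].
Qed.

Lemma row_free_col_mx m (v : 'rV[F]_n) (A : 'M[F]_(m, n)) :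
  row_free (col_mx v A) = row_free A && ~~ (v <= A)%MS.
Proof.
rewrite /row_free -addsmxE addsmxC.
have [vA | vA] := boolP (v <= A)%MS.
  by rewrite andbF (addsmx_idPl vA) ltn_eqF // add1n ltnS rank_leq_row.
by rewrite mxrank_adds_notin // andbT.
Qed.

Lemma exists_submx_rank m (M : 'M[F]_(m, n)) r : (r <= \rank M)%N ->
  exists U : 'M[F]_n, (U <= M)%MS /\ \rank U = r.
Proof.
move=> rM; exists (pid_mx r *m row_base M); split.
  by rewrite (submx_trans (submxMl _ _)) ?eq_row_base.
by rewrite mxrankMfree ?row_base_free // rank_pid_mx // (leq_trans rM) ?rank_leq_col.
Qed.

Lemma exists_rV_notin m (W : 'M[F]_(m, n)) : (\rank W < n)%N ->
  exists z : 'rV[F]_n, ~~ (z <= W)%MS.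
Proof.
move=> rW; have /row_subPn[i zW] : ~~ (1%:M <= W)%MS.
  by rewrite sub1mx /row_full ltn_eqF.
by exists (row i 1%:M).
Qed.

Lemma mxrank_cap_geq m1 m2 m3 (W1 : 'M[F]_(m1, n)) (W2 : 'M[F]_(m2, n)) (D : 'M[F]_(m3, n)) :
  (W1 <= D)%MS -> (W2 <= D)%MS ->
  (\rank W1 + \rank W2 <= \rank D + \rank (W1 :&: W2))%N.
Proof.
move=> W1D W2D; rewrite -mxrank_sum_cap leq_add2r mxrankS //.
by rewrite addsmx_sub W1D.
Qed.

End MatrixRank.

Section RowSpaces.
Variables (F : finFieldType) (n : nat).
Local Notation q := #|F|.

Definition rowspace m (A : 'M[F]_(m, n)) : {set 'rV[F]_n} := [set x | (x <= A)%MS].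

Lemma sub_rowspace m1 m2 (A : 'M_(m1, n)) (B : 'M_(m2, n)) :
  (rowspace A \subset rowspace B) = (A <= B)%MS.
Proof.
apply/subsetP/idP => [sAB | sAB x]; last by rewrite !inE => /submx_trans; apply.
by apply/row_subP => i; have := sAB (row i A); rewrite !inE row_sub => /(_ isT).
Qed.

Lemma eq_rowspace m1 m2 (A : 'M_(m1, n)) (B : 'M_(m2, n)) :
  (rowspace A == rowspace B) = (A == B)%MS.
Proof. by rewrite eqEsubset !sub_rowspace. Qed.

Lemma card_rowspace m (A : 'M_(m, n)) : #|rowspace A| = (q ^ \rank A)%N.
Proof.
have -> : rowspace A = [set u *m row_base A | u in 'rV_(\rank A)].
  apply/setP => x; rewrite inE -(eq_row_base A).
  by apply/submxP/imsetP => [] [u]; exists u.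
rewrite card_imset ?card_mx ?mul1n //; exact/row_free_inj/row_base_free.
Qed.

Lemma card_row_free m : (m <= n)%N ->
  #|[pred A : 'M[F]_(m, n) | row_free A]| = (\prod_(i < m) (q ^ n - q ^ i))%N.
Proof.
elim: m => [_ | m IHm /ltnW le_mn].
  rewrite big_ord0 -[1%N](card_mx F 0 n); apply: eq_card => A.
  by rewrite !inE /row_free -leqn0 rank_leq_row.
have /eq_card -> : [pred B : 'M[F]_(1 + m, n) | row_free B] =i
    [set col_mx p.2 p.1
      | p in [set p : 'M_(m, n) * 'rV_n | row_free p.1 && ~~ (p.2 <= p.1)%MS]].
  move=> B; rewrite inE; apply/idP/imsetP => [fB | [[A v] /= ] ].
    exists (dsubmx B, usubmx B); last by rewrite vsubmxK.
    by rewrite inE -row_free_col_mx vsubmxK.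
  by rewrite inE => AvP ->; rewrite row_free_col_mx.
rewrite card_imset; last by move=> [A v] [A' v'] /= /eq_col_mx [-> ->].
rewrite big_ord_recr /= -{}IHm // -sum1_card -sum_nat_const.
transitivity (\sum_(A : 'M[F]_(m, n) | row_free A) \sum_(v : 'rV[F]_n | ~~ (v <= A)%MS) 1)%N.
  by rewrite pair_big_dep; apply: eq_bigl => p; rewrite inE.
apply: eq_big => [A | A /eqP rA]; first by rewrite inE.
rewrite sum1_card; have := cardsC (rowspace A).
rewrite card_rowspace rA card_mx mul1n => <-; rewrite addKn.
by apply: eq_card => v; rewrite !inE.
Qed.

Definition directions k : {set {set 'rV[F]_n}} :=
  [set rowspace A | A in [pred A : 'M[F]_(k, n) | row_free A]].

Lemma card_row_free_directions k :
  #|[pred A : 'M[F]_(k, n) | row_free A]| =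
  (#|directions k| * #|[pred G : 'M[F]_k | row_free G]|)%N.
Proof.
rewrite -[LHS]sum1_card (partition_big_imset (@rowspace k)) /= -sum_nat_const.
apply: eq_bigr => _ /imsetP[A0 fA0 ->]; rewrite sum1_card.
rewrite -(card_imset _ (row_free_inj fA0)); apply: eq_card => A.
rewrite [in LHS]unfold_in /= !inE eq_rowspace.
apply/and3P/imsetP => [[fA AA0 _] | [G fG ->]].
  exists (A *m pinvmx A0); last by rewrite mulmxKpV.
  by rewrite inE /row_free -(mxrankMfree _ fA0) mulmxKpV.
have GA0 : (G *m A0 :=: A0)%MS by apply: eqmxMfull; rewrite row_full_unit -row_free_unit.
by rewrite [row_free _]/row_free mxrankMfree // !GA0 submx_refl.
Qed.

End RowSpaces.

Lemma prod_expnB q m k : (0 < q)%N -> (k <= m)%N ->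
  (\prod_(i < k) (q ^ m - q ^ i) = \prod_(i < k) q ^ i * \prod_(i < k) (q ^ (m - i) - 1))%N.
Proof.
move=> q0 km; rewrite -big_split; apply: eq_bigr => i _ /=.
by rewrite mulnBr muln1 -expnD subnKC // (leq_trans (ltnW (ltn_ord i))).
Qed.

Lemma gauss_binomE (R : realType) q n k N : (1 < q)%N -> (k <= n)%N ->
  (N * \prod_(i < k) (q ^ k - q ^ i))%N = (\prod_(i < k) (q ^ n - q ^ i))%N ->
  (N%:R : R) = gauss_binom R q n k.
Proof.
move=> q1 kn; have q0 := ltnW q1.
rewrite !prod_expnB // mulnCA => /eqP.
rewrite eqn_pmul2l => [/eqP|]; last by apply: prodn_gt0 => i; rewrite expn_gt0 q0.
rewrite (reindex_inj rev_ord_inj) /=.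
under eq_bigr do rewrite subKn //.
move=> /(congr1 (fun m => m%:R : R)); rewrite natrM !natr_prod.
have natr_expn_sub1 j : ((q ^ j - 1)%N%:R : R) = q%:R ^+ j - 1.
  by rewrite natrB ?expn_gt0 ?q0 // natrX.
under eq_bigr do rewrite natr_expn_sub1.
under [RHS]eq_bigr do rewrite natr_expn_sub1.
rewrite /gauss_binom => <-; rewrite mulfK // prodf_seq_neq0.
apply/allP => i _ /=.
by rewrite subr_eq0 -natrX pnatr_eq1 -[1%N](expn0 q) (inj_eq (expnI q1)).
Qed.

Lemma card_directions (R : realType) (F : finFieldType) n k : (k <= n)%N ->
  (#|directions F n k|%:R : R) = gauss_binom R #|F| n k.
Proof.
move=> kn; apply: gauss_binomE => //; first exact: (card_finNzRing_gt1 F).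
by rewrite -(card_row_free F kn) -(card_row_free F (leqnn k)) (card_row_free_directions F n k).
Qed.

Section Flats.
Variables (F : finFieldType) (n : nat).
Implicit Types (U W S : 'M[F]_n) (a b e v x : 'rV[F]_n).

Definition flat v U : {set 'rV[F]_n} := [set x | (x - v <= U)%MS].

Lemma subr_submx_trans m (M : 'M[F]_(m, n)) x a e :
  (x - a <= M)%MS -> (a - e <= M)%MS -> (x - e <= M)%MS.
Proof. by move=> xa ae; rewrite -(subrKA a x (- e)) addmx_sub. Qed.

Lemma subr_submx_diff m (M : 'M[F]_(m, n)) a b e :
  (a - e <= M)%MS -> (b - e <= M)%MS -> (b - a <= M)%MS.
Proof. by move=> ae be; rewrite (subr_submx_trans be) // -opprB eqmx_opp. Qed.

Lemma flat_id v U : v \in flat v U.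
Proof. by rewrite inE subrr sub0mx. Qed.

Lemma eq_flatP a b U : reflect (flat a U = flat b U) (a - b <= U)%MS.
Proof.
apply: (iffP idP) => [ab | eq_ab]; last by have := flat_id a U; rewrite eq_ab inE.
apply/setP => x; rewrite !inE; apply/idP/idP => [xa | xb].
  exact: subr_submx_trans ab.
by rewrite (subr_submx_trans xb) // -opprB eqmx_opp.
Qed.

Lemma flat_full v : flat v 1%:M = [set: 'rV[F]_n].
Proof. by apply/setP => x; rewrite !inE submx1. Qed.

Lemma eqmx_flat v U W : (U :=: W)%MS -> flat v U = flat v W.
Proof. by move=> eqUW; apply/setP => x; rewrite !inE eqUW. Qed.

Lemma subset_flat a e U S :
  (U <= S)%MS -> (a - e <= S)%MS -> flat a U \subset flat e S.
Proof.
move=> US ae; apply/subsetP => x; rewrite !inE => xa.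
exact: subr_submx_trans (submx_trans xa US) ae.
Qed.

Lemma flat_in_affine_kspaces k v U : \rank U = k -> flat v U \in affine_kspaces F n k.
Proof.
by move=> rU; rewrite inE; apply/existsP; exists v; apply/existsP; exists U; rewrite rU !eqxx.
Qed.

Lemma affine_kspacesP k K : K \in affine_kspaces F n k ->
  exists v U, \rank U = k /\ K = flat v U.
Proof. by rewrite inE => /existsP[v /existsP[U /andP[/eqP rU /eqP ->]]]; exists v, U. Qed.

Definition direction (K : {set 'rV[F]_n}) : {set 'rV[F]_n} := [set x - z | x in K, z in K].

Lemma direction_flat v U : direction (flat v U) = rowspace U.
Proof.
apply/setP => u; rewrite inE; apply/imset2P/idP => [[x z] | uU].
  by rewrite !inE => xv zv ->; apply: subr_submx_diff zv xv.
by exists (u + v) v; rewrite ?inE ?addrK ?subrr ?sub0mx.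
Qed.

End Flats.

Section CameronLieblerSets.
Variables (R : realType) (F : finFieldType) (n k : nat) (L : {set {set 'rV[F]_n}}).
Variable y : 'rV[F]_n -> R.
Hypothesis Ly : forall K, K \in affine_kspaces F n k ->
  ((K \in L)%:R : R) = \sum_(P in K) y P.
Implicit Types (U W S D : 'M[F]_n) (a b c e v : 'rV[F]_n) (E : {set 'rV[F]_n}).

Definition parallel_flats U E := [set flat p U | p in E].
Definition parallel_count U E := #|L :&: parallel_flats U E|.

Lemma parallel_countS U E1 E2 :
  E1 \subset E2 -> (parallel_count U E1 <= parallel_count U E2)%N.
Proof. by move=> sE12; rewrite subset_leq_card // setIS // imsetS. Qed.

Lemma sum_indicator (X : {set {set 'rV[F]_n}}) :
  \sum_(K in X) ((K \in L)%:R : R) = #|L :&: X|%:R.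
Proof.
rewrite -sum1_card natr_sum big_mkcond [RHS]big_mkcond /=.
by apply: eq_bigr => K _; rewrite in_setI; case: (K \in X); case: (K \in L).
Qed.

Lemma parallel_count_sum U S e : \rank U = k -> (U <= S)%MS ->
  (parallel_count U (flat e S))%:R = \sum_(P in flat e S) y P.
Proof.
move=> rU US; rewrite (partition_big_imset (fun p => flat p U)) -sum_indicator.
apply: eq_bigr => _ /imsetP[p pS ->]; rewrite Ly ?flat_in_affine_kspaces //.
apply: eq_bigl => P; rewrite (sameP eqP (eq_flatP _ _ _)) !inE andb_idl // => Pp.
by rewrite inE in pS; exact: subr_submx_trans (submx_trans Pp US) pS.
Qed.

Lemma parallel_count_indep U1 U2 S e :
  \rank U1 = k -> \rank U2 = k -> (U1 <= S)%MS -> (U2 <= S)%MS ->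
  parallel_count U1 (flat e S) = parallel_count U2 (flat e S).
Proof.
move=> rU1 rU2 U1S U2S; apply/eqP; rewrite -(eqr_nat R).
by rewrite !parallel_count_sum.
Qed.

Lemma parallel_count_setT_indep U1 U2 : \rank U1 = k -> \rank U2 = k ->
  parallel_count U1 setT = parallel_count U2 setT.
Proof. by move=> rU1 rU2; rewrite -(flat_full 0) (parallel_count_indep 0 rU1 rU2) ?submx1. Qed.

Lemma card_CL U0 : L \subset affine_kspaces F n k -> \rank U0 = k ->
  #|L| = (#|directions F n k| * parallel_count U0 setT)%N.
Proof.
move=> Lk rU0.
rewrite -sum1_card (partition_big (@direction F n) (mem (directions F n k))) /=; last first.
  move=> K /(subsetP Lk)/affine_kspacesP[v [U [rU ->]]]; rewrite direction_flat.
  rewrite -rU; apply/imsetP; exists (row_base U); first by rewrite inE row_base_free.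
  by apply/eqP; rewrite eq_rowspace; apply/eqmxP/eqmx_sym/eq_row_base.
rewrite -sum_nat_const; apply: eq_bigr => _ /imsetP[A fA ->].
rewrite (parallel_count_setT_indep rU0 (_ : \rank <<A>>%MS = k)); last first.
  by rewrite mxrank_gen; exact/eqP.
rewrite sum1_card /parallel_count; apply: eq_card => K; rewrite !inE.
apply: andb_id2l => /(subsetP Lk)/affine_kspacesP[v [U [rU ->]]].
rewrite direction_flat eq_rowspace; apply/idP/imsetP => [UA | [p _]].
  exists v; rewrite ?inE //; apply: eqmx_flat.
  exact: eqmx_trans (eqmxP UA) (eqmx_sym (genmxE A)).
move=> /(congr1 (@direction F n)); rewrite !direction_flat => /eqP.
by rewrite eq_rowspace => /eqmxP/eqmx_trans/(_ (genmxE A))/eqmxP.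
Qed.

Hypothesis two_per_class : forall U, \rank U = k -> parallel_count U setT = 2%N.

Lemma two_members U : \rank U = k ->
  exists a b, [/\ ~~ (b - a <= U)%MS, flat a U \in L & flat b U \in L].
Proof.
move=> rU; have /eqP/cards2P[K1 [K2 [neqK defL]]] := two_per_class rU.
have : K1 \in L :&: parallel_flats U setT by rewrite defL !inE eqxx.
have : K2 \in L :&: parallel_flats U setT by rewrite defL !inE eqxx orbT.
rewrite !inE => /andP[K2L /imsetP[b _ defK2]] /andP[K1L /imsetP[a _ defK1]].
exists a, b; rewrite -defK1 -defK2; split=> //.
by apply: contra neqK => /eq_flatP eq_ba; rewrite defK1 defK2 eq_ba.
Qed.

Lemma member_in_flat U S e a : \rank U = k -> (U <= S)%MS ->
  parallel_count U (flat e S) = 2%N -> flat a U \in L -> (a - e <= S)%MS.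
Proof.
move=> rU US count2 aL.
have eqL : L :&: parallel_flats U (flat e S) = L :&: parallel_flats U setT.
  apply/eqP; rewrite eqEcard setIS ?imsetS ?subsetT //=.
  by rewrite -/(parallel_count _ _) -/(parallel_count _ _) count2 two_per_class.
have : flat a U \in L :&: parallel_flats U (flat e S).
  by rewrite eqL inE aL; apply/imsetP; exists a.
rewrite inE => /andP[_ /imsetP[p pS /eq_flatP ap]].
by rewrite inE in pS; exact: subr_submx_trans (submx_trans ap US) pS.
Qed.

Lemma member_diff_in_flat U S e a b : \rank U = k -> (U <= S)%MS ->
  parallel_count U (flat e S) = 2%N -> flat a U \in L -> flat b U \in L ->
  (b - a <= S)%MS.
Proof.
move=> rU US count2 aL bL.
exact: subr_submx_diff (member_in_flat rU US count2 aL) (member_in_flat rU US count2 bL).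
Qed.

Lemma parallel_count_eq2S U W D c : \rank U = k -> (W <= D)%MS ->
  parallel_count U (flat c W) = 2%N -> parallel_count U (flat c D) = 2%N.
Proof.
move=> rU WD countW; apply/eqP; rewrite eqn_leq -{1}(two_per_class rU).
rewrite parallel_countS ?subsetT //= -{1}countW parallel_countS //.
by rewrite subset_flat // subrr sub0mx.
Qed.

Lemma exists_plane U S e : \rank U = k -> (U <= S)%MS ->
  parallel_count U (flat e S) = 2%N ->
  exists W c, [/\ (U <= W)%MS, (W <= S)%MS, \rank W = k.+1
                 & parallel_count U (flat c W) = 2%N].
Proof.
move=> rU US count2; have [a [b [abU aL bL]]] := two_members rU.
exists (U + (b - a))%MS, a; split.
- exact: addsmxSl.
- by rewrite addsmx_sub US (member_diff_in_flat rU US count2 aL bL).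
- by rewrite mxrank_adds_notin // rU.
apply/eqP; rewrite eqn_leq -{1}(two_per_class rU) parallel_countS ?subsetT //=.
have neq_ab : flat a U != flat b U by apply: contra abU => /eqP/esym/eq_flatP.
have <- : #|[set flat a U; flat b U]| = 2%N by rewrite cards2 neq_ab.
apply: subset_leq_card.
apply/subsetP => K; rewrite !inE => /orP[] /eqP ->; rewrite ?aL ?bL /=.
  by apply/imsetP; exists a; rewrite ?flat_id.
by apply/imsetP; exists b; rewrite // inE addsmxSr.
Qed.

Lemma plane_unique U W1 W2 e1 e2 : \rank U = k ->
  (U <= W1)%MS -> (U <= W2)%MS -> \rank W1 = k.+1 ->
  parallel_count U (flat e1 W1) = 2%N -> parallel_count U (flat e2 W2) = 2%N ->
  (W1 <= W2)%MS.
Proof.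
move=> rU UW1 UW2 rW1 count1 count2; have [a [b [abU aL bL]]] := two_members rU.
have sUW1 : (U + (b - a) <= W1)%MS.
  by rewrite addsmx_sub UW1 (member_diff_in_flat rU UW1 count1 aL bL).
have W1_sub : (W1 <= U + (b - a))%MS.
  by rewrite -(mxrank_leqif_sup sUW1).2 mxrank_adds_notin // rU rW1.
by rewrite (submx_trans W1_sub) // addsmx_sub UW2 (member_diff_in_flat rU UW2 count2 aL bL).
Qed.

Lemma two_per_class_absurd : (1 <= k)%N -> (k + 2 <= n)%N -> False.
Proof.
move=> k_gt0 kn; pose U0 : 'M[F]_n := pid_mx k.
have rU0 : \rank U0 = k by rewrite rank_pid_mx //; lia.
have count0 : parallel_count U0 (flat 0 1%:M) = 2%N by rewrite flat_full two_per_class.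
have [W [c [U0W _ rW countW]]] := exists_plane rU0 (submx1 U0) count0.
have [z zW] : exists z : 'rV[F]_n, ~~ (z <= W)%MS by apply: exists_rV_notin; rewrite rW; lia.
pose D := (W + z)%MS; have WD : (W <= D)%MS := addsmxSl W z.
have rD : \rank D = k.+2 by rewrite mxrank_adds_notin // rW.
have countD U : \rank U = k -> (U <= D)%MS -> parallel_count U (flat c D) = 2%N.
  move=> rU UD; rewrite (parallel_count_indep c rU rU0 UD (submx_trans U0W WD)).
  exact: parallel_count_eq2S countW.
have [T [TU0 rT]] : exists T : 'M[F]_n, (T <= U0)%MS /\ \rank T = k.-1.
  by apply: exists_submx_rank; rewrite rU0 leq_pred.
pose U2 := (T + z)%MS.
have rU2 : \rank U2 = k.
  rewrite mxrank_adds_notin ?rT ?prednK //.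
  by apply: contra zW => /submx_trans; apply; exact: submx_trans TU0 U0W.
have U2D : (U2 <= D)%MS.
  by rewrite addsmx_sub addsmxSr andbT (submx_trans TU0) // (submx_trans U0W).
have [W2 [c2 [U2W2 W2D rW2 countW2]]] := exists_plane rU2 U2D (countD _ rU2 U2D).
have [U [UW12 rU]] : exists U : 'M[F]_n, (U <= W :&: W2)%MS /\ \rank U = k.
  by apply: exists_submx_rank; have := mxrank_cap_geq WD W2D; rewrite rW rW2 rD; lia.
have UW := submx_trans UW12 (capmxSl W W2); have UW2 := submx_trans UW12 (capmxSr W W2).
have W2W : (W2 <= W)%MS.
  apply: (plane_unique (e1 := c2) (e2 := c) rU UW2 UW rW2).
    by rewrite (parallel_count_indep c2 rU rU2 UW2 U2W2).
  by rewrite (parallel_count_indep c rU rU0 UW U0W).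
by move: zW; rewrite (submx_trans (submx_trans (addsmxSr T z) U2W2) W2W).
Qed.

End CameronLieblerSets.

Theorem corollary6p16 (R : realType) (F : finFieldType) (n k : nat) :
  (1 <= k)%N -> (k + 2 <= n)%N ->
  ~ (exists L : {set {set 'rV[F]_n}},
        @is_CL_kset R F n k L /\ @CL_parameter R F n k L = 2).
Proof.
move=> k_gt0 kn [L [[Lk [y Ly]] param2]].
have kn' : (k <= n)%N by lia.
have rU0 : \rank (pid_mx k : 'M[F]_n) = k by rewrite rank_pid_mx.
have count2 : parallel_count L (pid_mx k) setT = 2%N.
  move: param2; rewrite /CL_parameter (card_CL Ly Lk rU0) natrM -(card_directions R F kn').
  have [-> | N0] := eqVneq #|directions F n k| 0%N.
    by rewrite !mul0r => /eqP; rewrite eq_sym pnatr_eq0.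
  by rewrite mulrC mulKf ?pnatr_eq0 // => /eqP; rewrite (eqr_nat R _ 2) => /eqP.
apply: (two_per_class_absurd Ly _ k_gt0 kn) => U rU.
by rewrite (parallel_count_setT_indep Ly rU rU0).
Qed.
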